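(* Let $n\ge1$. Let $\mathbf{R}$ be a subalgebra of $\mathbf{P\L}_n\times\mathbf{P\L}_n$ with $\mathbf{R}\subseteq{\le}$. Assume $\mathbf{R}$ is not the diagonal $\{(s,s):s\in S\}$ of any subalgebra $\mathbf{S}$ of $\mathbf{P\L}_n$. Put $\mathbf{S}=\mathrm{pr}_1(\mathbf{R})\times\mathrm{pr}_2(\mathbf{R})$. If $(x,y)\in\mathbf{R}$, then $C_{(x,y),\mathbf{S}}\subseteq\mathbf{R}$.
   Context: For $n\ge 1$, the algebra $\mathbf{P\L}_n=\langle\{0,\tfrac1n,\dots,\tfrac{n-1}{n},1\},\wedge,\vee,\odot,\oplus,0,1\rangle$ has $\wedge=\min$, $\vee=\max$, $x\odot y=\max\{0,x+y-1\}$ and $x\oplus y=\min\{1,x+y\}$. The order is ${\le}=\{(x,y): x\le y\}\subseteq\mathbf{P\L}_n^2$. Let $\mathbf{S}=\mathbf{S}_1\times\mathbf{S}_2$ be a product of subalgebras of $\mathbf{P\L}_n$, and let $(x,y)\in\mathbf{S}$ with $x\le y$. Define $$C_{(x,y),\mathbf{S}}=\{(x',y')\in \mathbf{S}: x'\le x\text{ and }y\le y'\}.$$ *)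

From mathcomp Require Import all_boot all_order all_algebra.
Set Implicit Arguments. Unset Strict Implicit. Unset Printing Implicit Defensive.
Import Order.TTheory GRing.Theory Num.Theory.
Local Open Scope ring_scope.

Definition PL (n : nat) (x : rat) : Prop :=
  exists k : nat, (k <= n)%N /\ x = k%:R / n%:R.

Definition lmeet (x y : rat) : rat := Num.min x y.
Definition ljoin (x y : rat) : rat := Num.max x y.
Definition lodot (x y : rat) : rat := Num.max 0 (x + y - 1).
Definition loplus (x y : rat) : rat := Num.min 1 (x + y).

Definition subalg (n : nat) (S : rat -> Prop) : Prop :=
  [/\ (forall x, S x -> PL n x), S 0, S 1 &
      forall x y, S x -> S y ->
        [/\ S (lmeet x y), S (ljoin x y), S (lodot x y) & S (loplus x y)]].

Definition subalg2 (n : nat) (R : rat -> rat -> Prop) : Prop :=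
  [/\ (forall x y, R x y -> PL n x /\ PL n y), R 0 0, R 1 1 &
      forall x1 y1 x2 y2, R x1 y1 -> R x2 y2 ->
        [/\ R (lmeet x1 x2) (lmeet y1 y2), R (ljoin x1 x2) (ljoin y1 y2),
            R (lodot x1 x2) (lodot y1 y2) & R (loplus x1 x2) (loplus y1 y2)]].

Definition pr1 (R : rat -> rat -> Prop) (x : rat) : Prop := exists y, R x y.
Definition pr2 (R : rat -> rat -> Prop) (y : rat) : Prop := exists x, R x y.

Definition is_diagonal (R : rat -> rat -> Prop) (S : rat -> Prop) : Prop :=
  forall x y, R x y <-> (S x /\ x = y).

(* C_{(x,y),S} for S = S1 x S2. *)
Definition Cset (S1 S2 : rat -> Prop) (x y : rat) (x' y' : rat) : Prop :=
  [/\ S1 x', S2 y', x' <= x & y <= y'].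

(* If R contains a strict pair (a, b), iterating the squarings t |-> t (+) t and
   t |-> t (.) t on both coordinates doubles the gap b - a while it fits; since the
   gap is a positive multiple of 1/n this ends at a pair (0, b'), and doubling
   (0, b') reaches (0, 1).  Given (0, 1), a pair (x', y') below (x, y) in the
   product order of S is the join of (x', y'') /\ (x, y) and (0, 1) /\ (x'', y').
   If R has no strict pair, it is the diagonal of its first projection. *)
From mathcomp Require Import all_boot all_order all_algebra.
From mathcomp Require Import zify.
From Stdlib Require Import Classical.
Import Order.TTheory GRing.Theory Num.Theory.
Local Open Scope ring_scope.

Local Notation grid n k := (k%:R / n%:R : rat).

Section Grid.

Variable n : nat.
Hypothesis n_gt0 : (0 < n)%N.

Let n_pos : (0 : rat) < n%:R. Proof. by rewrite ltr0n. Qed.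

Lemma loplus_grid k l : loplus (grid n k) (grid n l) = grid n (minn n (k + l)).
Proof.
rewrite /loplus -mulrDl -natrD; case: (leqP n (k + l)) => h.
  by rewrite divff ?gt_eqF //; apply/min_idPl; rewrite ler_pdivlMr // mul1r ler_nat.
by apply/min_idPr; rewrite ler_pdivrMr // mul1r ler_nat ltnW.
Qed.

Lemma lodot_grid k l : lodot (grid n k) (grid n l) = grid n (k + l - n).
Proof.
rewrite /lodot -mulrDl -natrD; case: (leqP n (k + l)) => h.
  rewrite natrB // mulrBl divff ?gt_eqF //; apply/max_idPr.
  by rewrite subr_ge0 ler_pdivlMr // mul1r ler_nat.
have /eqP -> : (k + l - n == 0)%N by rewrite subn_eq0 ltnW.
by rewrite mul0r; apply/max_idPl; rewrite subr_le0 ler_pdivrMr // mul1r ler_nat ltnW.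
Qed.

Lemma grid_ltr k l : (grid n k < grid n l) = (k < l)%N.
Proof. by rewrite ltr_pM2r ?invr_gt0 // ltr_nat. Qed.

End Grid.

Lemma PL_bounds {n : nat} {x : rat} : (0 < n)%N -> PL n x -> 0 <= x <= 1.
Proof.
move=> n_gt0 [k [kn ->]]; rewrite divr_ge0 ?ler0n //=.
by rewrite ler_pdivrMr ?ltr0n // mul1r ler_nat.
Qed.

Section Subalgebra2.

Context {n : nat} {R : rat -> rat -> Prop}.
Hypotheses (n_gt0 : (0 < n)%N) (R_alg : subalg2 n R).

Lemma subalg2_ops {x1 y1 x2 y2 : rat} : R x1 y1 -> R x2 y2 ->
  [/\ R (lmeet x1 x2) (lmeet y1 y2), R (ljoin x1 x2) (ljoin y1 y2),
      R (lodot x1 x2) (lodot y1 y2) & R (loplus x1 x2) (loplus y1 y2)].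
Proof. by case: R_alg => _ _ _; apply. Qed.

Lemma R_oplus_grid {k l : nat} : R (grid n k) (grid n l) ->
  R (grid n (minn n (k + k))) (grid n (minn n (l + l))).
Proof. by move=> Rkl; case: (subalg2_ops Rkl Rkl) => _ _ _; rewrite !loplus_grid. Qed.

Lemma R_odot_grid {k l : nat} : R (grid n k) (grid n l) ->
  R (grid n (k + k - n)) (grid n (l + l - n)).
Proof. by move=> Rkl; case: (subalg2_ops Rkl Rkl) => _ _; rewrite !lodot_grid. Qed.

Lemma R_zero_one_of_zero_grid {l : nat} : (0 < l <= n)%N -> R 0 (grid n l) -> R 0 1.
Proof.
have [m] := ubnP (n - l); elim: m l => // m IH l lt_m hl R0l.
have [ln|ln] := eqVneq l n; first by move: R0l; rewrite ln divff ?gt_eqF ?ltr0n.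
have := R_oplus_grid (k := 0) (l := l); rewrite mul0r => /(_ R0l) R0l2.
by apply: (IH (minn n (l + l))); [lia | lia | exact: R0l2].
Qed.

(* (+)-doubling when the pair lies in [0, 1/2], (.)-doubling otherwise: either the
   gap doubles or the lower coordinate becomes 0. *)
Lemma R_zero_grid_of_lt {k l : nat} : (k < l <= n)%N -> R (grid n k) (grid n l) ->
  exists2 l', (0 < l' <= n)%N & R 0 (grid n l').
Proof.
have [m] := ubnP (n - (l - k)); elim: m k l => // m IH k l lt_m hkl Rkl.
have [k0|k_gt0] := posnP k; first by exists l; [lia | rewrite k0 mul0r in Rkl].
have [hl|hl] := leqP (l + l) n.
  by apply: (IH (minn n (k + k)) (minn n (l + l))); [lia | lia | exact: R_oplus_grid].
have [hk|hk] := leqP (k + k) n.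
  exists (l + l - n)%N; first by lia.
  have /eqP k0 : (k + k - n == 0)%N by lia.
  by have := R_odot_grid Rkl; rewrite k0 mul0r.
by apply: (IH (k + k - n)%N (l + l - n)%N); [lia | lia | exact: R_odot_grid].
Qed.

Lemma R_zero_one_of_lt {a b : rat} : R a b -> a < b -> R 0 1.
Proof.
move=> Rab ab; case: R_alg => RPL _ _ _.
have [[k [kn ak]] [l [ln bl]]] := RPL _ _ Rab.
rewrite ak bl grid_ltr // in ab; rewrite ak bl in Rab.
have hkl : (k < l <= n)%N by lia.
have [l' hl' R0l'] := R_zero_grid_of_lt hkl Rab.
exact: R_zero_one_of_zero_grid hl' R0l'.
Qed.

Lemma diagonal_pr1 : (forall a b, R a b -> a = b) ->
  subalg n (pr1 R) /\ is_diagonal R (pr1 R).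
Proof.
move=> eqR; case: R_alg => RPL R00 R11 _; split.
  split; [by move=> a [b /RPL[]] | by exists 0 | by exists 1 |].
  move=> a b [a' Ra] [b' Rb].
  have ea := eqR _ _ Ra; have eb := eqR _ _ Rb; subst a' b'.
  by case: (subalg2_ops Ra Rb) => *; split; eexists; eassumption.
move=> a b; split; first by move=> Rab; split; [exists b | exact: eqR].
by move=> [[b' Rab'] <-]; rewrite {2}(eqR _ _ Rab').
Qed.

Lemma R_Cset_closed {x y x' y' : rat} : R 0 1 -> R x y ->
  Cset (pr1 R) (pr2 R) x y x' y' -> R x' y'.
Proof.
move=> R01 Rxy [[y'' Rx'] [x'' Ry'] x'x yy']; case: R_alg => RPL _ _ _.
case: (subalg2_ops Rx' Rxy) => R1 _ _ _; case: (subalg2_ops R01 Ry') => R2 _ _ _.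
case: (subalg2_ops R1 R2) => _ + _ _.
have /andP[x'0 _] := PL_bounds n_gt0 (RPL _ _ Rx').1.
have /andP[x''0 _] := PL_bounds n_gt0 (RPL _ _ Ry').1.
have /andP[_ y'1] := PL_bounds n_gt0 (RPL _ _ Ry').2.
rewrite /ljoin /lmeet (min_idPl x'x) (min_idPl x''0) (max_idPl x'0) (min_idPr y'1).
by rewrite (max_idPr _) // ge_min yy' orbT.
Qed.

End Subalgebra2.

Theorem lemma3p11 (n : nat) (R : rat -> rat -> Prop) :
  (1 <= n)%N ->
  subalg2 n R ->
  (forall x y, R x y -> x <= y) ->
  ~ (exists S : rat -> Prop, subalg n S /\ is_diagonal R S) ->
  forall x y, R x y ->
  forall x' y', Cset (pr1 R) (pr2 R) x y x' y' -> R x' y'.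
Proof.
move=> n_gt0 R_alg Rle notdiag x y Rxy x' y'.
apply: (R_Cset_closed n_gt0 R_alg _ Rxy).
have [[a [b [Rab ab]]]|nostrict] := classic (exists a b, R a b /\ a < b).
  exact: (R_zero_one_of_lt n_gt0 R_alg Rab ab).
exfalso; apply: notdiag; exists (pr1 R); apply: diagonal_pr1 => // a b Rab.
apply/eqP; rewrite eq_le Rle //= leNgt; apply/negP => ab.
by apply: nostrict; exists a, b.
Qed.
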